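(* Let $A$ be a finite nonempty set and $M\subseteq A^A$. Then $\overline{M}=\mathrm{End}\,\mathrm{gQuord}\,M$.
   Context: A relation $\rho\subseteq A^m$ is a generalized quasiorder if it is reflexive ($(a,\dots,a)\in\rho$ for all $a$) and transitive: for every $m\times m$-matrix over $A$ all of whose rows and columns belong to $\rho$, its diagonal belongs to $\rho$. $\mathrm{gQuord}(A)$ denotes the set of all generalized quasiorders on $A$ (of all arities). A unary map $h$ preserves $\rho$ if $(h x_1,\dots,h x_m)\in\rho$ whenever $(x_1,\dots,x_m)\in\rho$. For $M\subseteq A^A$, $\mathrm{gQuord}\,M$ is the set of all $\rho\in\mathrm{gQuord}(A)$ preserved by every $h\in M$; for $Q\subseteq\mathrm{gQuord}(A)$, $\mathrm{End}\,Q$ is the set of all $h\in A^A$ preserving every $\rho\in Q$. A translation of an $n$-ary operation $f$ is a unary map $x\mapsto f(a_1,\dots,a_{i-1},x,a_{i+1},\dots,a_n)$ with fixed $a_j\in A$; $\mathrm{trl}(f)$ is the set of translations ($\{f\}$ for unary $f$); $N^*:=\{f\mid \mathrm{trl}(f)\subseteq N\}$. The u-closure $\overline M$ is the intersection of all monoids $N$ with $M\subseteq N\le A^A$ such that $N^*$ is a clone. *)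

From mathcomp Require Import all_boot.
Set Implicit Arguments. Unset Strict Implicit. Unset Printing Implicit Defensive.

Section GQuord.
Variable A : finType.

Definition umap := {ffun A -> A}.

Definition relation (m : nat) := {set {ffun 'I_m -> A}}.

Definition reflexive_rel m (rho : relation m) : Prop :=
  forall a : A, [ffun _ : 'I_m => a] \in rho.

Definition transitive_rel m (rho : relation m) : Prop :=
  forall X : 'I_m -> 'I_m -> A,
    (forall i, [ffun j => X i j] \in rho) ->
    (forall j, [ffun i => X i j] \in rho) ->
    [ffun i => X i i] \in rho.

Definition is_gquord m (rho : relation m) : Prop :=
  reflexive_rel rho /\ transitive_rel rho.

Definition preserves (h : umap) m (rho : relation m) : Prop :=
  forall x, x \in rho -> [ffun i => h (x i)] \in rho.

Definition gQuord (M : {set umap}) (m : nat) (rho : relation m) : Prop :=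
  is_gquord rho /\ forall h, h \in M -> preserves h rho.

Definition End_ (Q : forall m, relation m -> Prop) (h : umap) : Prop :=
  forall m (rho : relation m), Q m rho -> preserves h rho.

Definition op (n : nat) := ('I_n -> A) -> A.

Definition translation n (f : op n) (i : 'I_n) (a : 'I_n -> A) : umap :=
  [ffun x => f (fun j => if j == i then x else a j)].

Definition star (N : {set umap}) (n : nat) (f : op n) : Prop :=
  forall (i : 'I_n) (a : 'I_n -> A), translation f i a \in N.

Definition is_clone (C : forall n, op n -> Prop) : Prop :=
  (forall n (i : 'I_n), C n (fun x => x i)) /\
  (forall n m (f : op n) (g : 'I_n -> op m), 0 < n -> 0 < m ->
     C n f -> (forall i, C m (g i)) -> C m (fun x => f (fun i => g i x))).

Definition is_monoid (N : {set umap}) : Prop :=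
  [ffun x => x] \in N /\
  forall g h, g \in N -> h \in N -> [ffun x => g (h x)] \in N.

Definition u_closure (M : {set umap}) (h : umap) : Prop :=
  forall N : {set umap}, is_monoid N -> M \subset N -> is_clone (star N) ->
    h \in N.

End GQuord.

From mathcomp Require Import all_boot boolp.
Set Implicit Arguments. Unset Strict Implicit. Unset Printing Implicit Defensive.

(** Inclusion from left to right: [End Q] is a monoid containing [M] for
  [Q = gQuord M], and [(End Q)^*] is a clone because an operation all of whose
  translations preserve a generalized quasiorder preserves it as an operation.
  Inclusion from right to left: if [N] is a monoid containing [M] with [N^*] a
  clone, the relation of arity [|A|] formed by the value tuples
  [(g a_1, ..., g a_k)] of all [g] in [N] is a generalized quasiorder preserved
  by [N], hence by [M]; since it contains the tuple of the identity, every map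
  preserving it lies in [N]. *)

Section GeneralizedQuasiorders.
Variable A : finType.

Definition op_preserves n (f : op A n) m (rho : relation A m) : Prop :=
  forall u : 'I_n -> {ffun 'I_m -> A}, (forall i, u i \in rho) ->
    [ffun l => f (fun i => u i l)] \in rho.

Lemma const_preserves m (rho : relation A m) c :
  reflexive_rel rho -> preserves [ffun _ => c] rho.
Proof.
move=> rho_refl x _; rewrite (_ : [ffun _ => _] = [ffun _ => c]) //.
by apply/ffunP => i; rewrite !ffunE.
Qed.

Lemma id_preserves m (rho : relation A m) : preserves [ffun x => x] rho.
Proof.
by move=> x x_rho; rewrite (_ : [ffun _ => _] = x) //; apply/ffunP => i; rewrite !ffunE.
Qed.

Lemma comp_preserves (g h : umap A) m (rho : relation A m) :
  preserves g rho -> preserves h rho -> preserves [ffun x => g (h x)] rho.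
Proof.
move=> g_rho h_rho x x_rho.
suff -> : [ffun i => [ffun y => g (h y)] (x i)] = [ffun i => g ([ffun j => h (x j)] i)].
  exact/g_rho/h_rho.
by apply/ffunP => i; rewrite !ffunE.
Qed.

Section TranslationsPreserve.
Variables (a0 : A) (m n : nat) (rho : relation A m) (f : op A n).
Hypothesis rho_gquord : is_gquord rho.
Hypothesis trl_preserves : forall i a, preserves (translation f i a) rho.

(* Columns [u i] with [k <= i] are replaced by the constant values [a i]; the
   columns are then restored one at a time, each step being an instance of
   transitivity. *)
Lemma partial_apply_in_rel (u : 'I_n -> {ffun 'I_m -> A}) :
  (forall i, u i \in rho) -> forall k, k <= n -> forall a : 'I_n -> A,
    [ffun l => f (fun i => if i < k then u i l else a i)] \in rho.
Proof.
case: rho_gquord => rho_refl rho_trans u_rho; elim=> [_ a|k IHk lt_kn a].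
  rewrite (_ : [ffun _ => _] = [ffun _ => f a]); first exact: rho_refl.
  by apply/ffunP => l; rewrite !ffunE.
pose kk := Ordinal lt_kn.
have eq_kk (t : 'I_n) : (t == kk) = (t == k :> nat) by [].
pose X i j := f (fun t => if t < k then u t j else if t == kk then u kk i else a t).
have := rho_trans X.
have -> : [ffun i => X i i] = [ffun l => f (fun t => if t < k.+1 then u t l else a t)].
  apply/ffunP => l; rewrite !ffunE /X; congr f; apply: funext => t.
  rewrite eq_kk ltnS; case: ltngtP => // eq_tk.
  by rewrite (_ : kk = t) //; apply: val_inj.
apply=> [i | j].
  rewrite (_ : [ffun _ => _] = [ffun l => f (fun t => if t < k then u t l
            else if t == kk then u kk i else a t)]); first exact: IHk (ltnW lt_kn) _.
  by apply/ffunP => l; rewrite !ffunE.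
have := trl_preserves kk (fun t => if t < k then u t j else a t) (u_rho kk).
rewrite (_ : [ffun _ => _] = [ffun i => X i j]) //.
apply/ffunP => i; rewrite !ffunE /X; congr f; apply: funext => t.
by rewrite eq_kk; case: eqP => // ->; rewrite ltnn.
Qed.

Lemma translations_op_preserves : op_preserves f rho.
Proof.
move=> u u_rho; have := partial_apply_in_rel u_rho (leqnn n) (fun _ => a0).
rewrite (_ : [ffun _ => _] = [ffun l => f (fun i => u i l)]) //.
by apply/ffunP => l; rewrite !ffunE; congr f; apply: funext => i; rewrite ltn_ord.
Qed.

End TranslationsPreserve.

Definition End_set (Q : forall m, relation A m -> Prop) : {set umap A} :=
  [set h | `[< End_ Q h >]].

Lemma mem_End_set Q h : (h \in End_set Q) = `[< End_ Q h >].
Proof. by rewrite inE. Qed.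

Lemma End_set_monoid Q : is_monoid (End_set Q).
Proof.
split; first by rewrite mem_End_set; apply/asboolP => m rho _; apply: id_preserves.
move=> g h; rewrite !mem_End_set => /asboolP g_Q /asboolP h_Q.
by apply/asboolP => m rho Q_rho; apply: comp_preserves; [apply: g_Q | apply: h_Q].
Qed.

Lemma sub_End_set_gQuord (M : {set umap A}) : M \subset End_set (gQuord M).
Proof.
by apply/subsetP => h h_M; rewrite mem_End_set; apply/asboolP => m rho [_]; apply.
Qed.

Lemma End_set_star_clone (a0 : A) (Q : forall m, relation A m -> Prop) :
  (forall m rho, Q m rho -> is_gquord rho) -> is_clone (star (End_set Q)).
Proof.
move=> Q_gquord; split=> [n i k a | n p f g _ _ f_star g_star k a];
  rewrite mem_End_set; apply/asboolP => m rho Q_rho.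
  have [<- | neq_ik] := eqVneq i k.
    rewrite (_ : translation _ _ _ = [ffun x => x]); first exact: id_preserves.
    by apply/ffunP => x; rewrite !ffunE eqxx.
  rewrite (_ : translation _ _ _ = [ffun _ => a i]).
    by apply: const_preserves; case: (Q_gquord _ _ Q_rho).
  by apply/ffunP => x; rewrite !ffunE (negbTE neq_ik).
have End_Q (h : umap A) : h \in End_set Q -> preserves h rho.
  by rewrite mem_End_set => /asboolP; apply.
move=> x x_rho.
pose u i : {ffun 'I_m -> A} := [ffun l => translation (g i) k a (x l)].
rewrite (_ : [ffun _ => _] = [ffun l => f (fun i => u i l)]).
  apply: (translations_op_preserves a0 (Q_gquord _ _ Q_rho)) => [i b | i].
    exact: End_Q (f_star i b).
  exact: End_Q (g_star i k a) _ x_rho.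
apply/ffunP => l; rewrite !ffunE; congr f; apply: funext => i.
by rewrite !ffunE.
Qed.

Lemma u_closure_sub_End (a0 : A) (M : {set umap A}) h :
  u_closure M h -> End_ (gQuord M) h.
Proof.
move=> /(_ (End_set (gQuord M))) h_End; apply/asboolP; rewrite -mem_End_set.
apply: h_End; [exact: End_set_monoid | exact: sub_End_set_gQuord |].
by apply: (End_set_star_clone a0) => m rho [].
Qed.

Section ValueTuples.
Variable N : {set umap A}.

Definition value_tuple (g : umap A) : {ffun 'I_#|A| -> A} := [ffun i => g (enum_val i)].

Definition value_tuples : relation A #|A| := value_tuple @: N.

Lemma value_tuple_inj : injective value_tuple.
Proof.
move=> g h /ffunP eq_gh; apply/ffunP => x.
by move: (eq_gh (enum_rank x)); rewrite !ffunE enum_rankK.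
Qed.

Lemma mem_value_tuples (v : {ffun 'I_#|A| -> A}) (g : umap A) :
  (forall x, v (enum_rank x) = g x) -> (v \in value_tuples) = (g \in N).
Proof.
move=> eq_vg; rewrite (_ : v = value_tuple g) ?(mem_imset _ _ value_tuple_inj) //.
by apply/ffunP => i; rewrite ffunE -eq_vg enum_valK.
Qed.

Lemma star_clone_const c : is_clone (star N) -> [ffun _ => c] \in N.
Proof.
case=> proj_star _; have := proj_star 2 ord0 ord_max (fun _ => c).
by rewrite (_ : translation _ _ _ = [ffun _ => c]) //; apply/ffunP => x; rewrite !ffunE.
Qed.

(* The binary operation [F] lies in [N^*]; composing it with the pair of
   projections [(x, x)] gives its diagonal as a unary member of [N^*].
   The witness [a0] is needed: for empty [A], [N^*] is a clone even if [N] is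
   empty. *)
Lemma star_clone_diag (a0 : A) (F : A -> A -> A) : is_clone (star N) ->
  (forall y, [ffun x => F x y] \in N) -> (forall x, [ffun y => F x y] \in N) ->
  [ffun x => F x x] \in N.
Proof.
case=> proj_star comp_star F_l F_r.
have F_star : star N (fun v : 'I_2 -> A => F (v ord0) (v ord_max)).
  move=> i a; have [-> | /negbTE neq_i0] := eqVneq i ord0.
    by rewrite (_ : translation _ _ _ = [ffun x => F x (a ord_max)]) //;
      apply/ffunP => x; rewrite !ffunE.
  have -> : i = ord_max by apply: val_inj; case: i neq_i0 => [[|[|]]].
  by rewrite (_ : translation _ _ _ = [ffun y => F (a ord0) y]) //;
    apply/ffunP => y; rewrite !ffunE.
have := comp_star 2 1 _ (fun _ v => v ord0) erefl erefl F_star (fun _ => proj_star 1 ord0).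
move=> /(_ ord0 (fun _ => a0)).
by rewrite (_ : translation _ _ _ = [ffun x => F x x]) //; apply/ffunP => x; rewrite !ffunE.
Qed.

Lemma value_tuples_gquord (a0 : A) : is_clone (star N) -> is_gquord value_tuples.
Proof.
move=> N_clone; split=> [c | X row_X col_X].
  rewrite (mem_value_tuples (g := [ffun _ => c])) ?star_clone_const // => x.
  by rewrite !ffunE.
pose F x y := X (enum_rank x) (enum_rank y).
rewrite (mem_value_tuples (g := [ffun x => F x x])) => [|x]; last by rewrite !ffunE.
apply: star_clone_diag a0 _ N_clone _ _ => [y | x].
  have := col_X (enum_rank y).
  by rewrite (mem_value_tuples (g := [ffun x => F x y])) // => x; rewrite !ffunE.
have := row_X (enum_rank x).
by rewrite (mem_value_tuples (g := [ffun y => F x y])) // => y; rewrite !ffunE.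
Qed.

Lemma value_tuples_preserved h :
  is_monoid N -> h \in N -> preserves h value_tuples.
Proof.
case=> _ comp_N h_N _ /imsetP[g g_N ->].
rewrite (mem_value_tuples (g := [ffun y => h (g y)])) ?comp_N // => y.
by rewrite !ffunE enum_rankK.
Qed.

Lemma preserves_value_tuples h :
  is_monoid N -> preserves h value_tuples -> h \in N.
Proof.
case=> id_N _ /(_ (value_tuple [ffun x => x])).
rewrite (mem_imset _ _ value_tuple_inj) => /(_ id_N).
by rewrite (mem_value_tuples (g := h)) // => x; rewrite !ffunE enum_rankK.
Qed.

End ValueTuples.

Lemma End_sub_u_closure (a0 : A) (M : {set umap A}) h :
  End_ (gQuord M) h -> u_closure M h.
Proof.
move=> h_End N N_monoid sub_MN N_clone; apply: preserves_value_tuples => //.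
apply: h_End; split; first exact: value_tuples_gquord.
by move=> g /(subsetP sub_MN); apply: value_tuples_preserved.
Qed.

End GeneralizedQuasiorders.

Theorem theorem4p2 (A : finType) (HA : 0 < #|A|) (M : {set umap A}) :
  forall h : umap A, u_closure M h <-> End_ (gQuord M) h.
Proof.
have [a0 _] := card_gt0P HA.
by move=> h; split; [apply: u_closure_sub_End | apply: End_sub_u_closure].
Qed.
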